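(* Let $\Sigma$ be a finite group, $A$ a pseudofield, $\mathfrak m$ a maximal ideal of $A$, $K=A/\mathfrak m$, $L$ an algebraic closure of $K$, $\overline A=\operatorname{Fun}L$, and let $\Phi\colon A\to\overline A$ be the Taylor homomorphism at the identity associated to the composite $A\to K\to L$ (so $A$ is identified with the difference subring $\Phi(A)$ of $\overline A$). If $D$ is a difference closed pseudofield that is a difference subring of $\overline A$ with $\Phi(A)\subseteq D\subseteq\overline A$, then $D=\overline A$.
   Context: A difference ring is a commutative ring with identity with an action of the group $\Sigma$ by ring automorphisms. A pseudofield is an absolutely flat difference ring with no $\Sigma$-stable ideals other than $0$ and itself. $\operatorname{Fun}L$ is the ring of functions $\Sigma\to L$ with pointwise operations and $(\sigma f)(\tau)=f(\sigma^{-1}\tau)$. For a ring homomorphism $\varphi\colon A\to L$, the Taylor homomorphism at the identity $e$ is the unique difference homomorphism $\Phi\colon A\to\operatorname{Fun}L$ with $\Phi(a)(e)=\varphi(a)$, namely $\Phi(a)(\tau)=\varphi(\tau^{-1}a)$. A pseudofield $A$ is difference closed if for every $n$ and every $\Sigma$-stable ideal $\mathfrak a$ of the difference polynomial ring $A\{y_1,\dots,y_n\}$ (polynomial ring in the indeterminates $\sigma y_i$, with $\tau(\sigma y_i)=(\tau\sigma)y_i$) the radical of $\mathfrak a$ equals the set of difference polynomials vanishing at every common zero of $\mathfrak a$ in $A^n$ (evaluation via $\sigma y_i\mapsto\sigma(a_i)$). *)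

From HB Require Import structures.
From mathcomp Require Import all_boot all_order all_algebra all_fingroup.
Set Implicit Arguments. Unset Strict Implicit. Unset Printing Implicit Defensive.
Import GRing.Theory.
Local Open Scope ring_scope.

Definition diff_action (gT : finGroupType) (R : pzRingType) (act : gT -> R -> R) : Prop :=
  (forall x, act 1%g x = x) /\
  (forall s t x, act (s * t)%g x = act s (act t x)) /\
  (forall s x y, act s (x + y) = act s x + act s y) /\
  (forall s x y, act s (x * y) = act s x * act s y) /\
  (forall s, act s 1 = 1).

Definition diff_subring (gT : finGroupType) (R : pzRingType) (act : gT -> R -> R)
  (S : R -> Prop) : Prop :=
  S 0 /\ S 1 /\ (forall x, S x -> S (- x)) /\
  (forall x y, S x -> S y -> S (x + y)) /\
  (forall x y, S x -> S y -> S (x * y)) /\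
  (forall s x, S x -> S (act s x)).

Definition diff_ideal (gT : finGroupType) (R : pzRingType) (act : gT -> R -> R)
  (S I : R -> Prop) : Prop :=
  (forall x, I x -> S x) /\ I 0 /\
  (forall x y, I x -> I y -> I (x + y)) /\
  (forall r x, S r -> I x -> I (r * x)) /\
  (forall s x, I x -> I (act s x)).

(* Absolute flatness of the (commutative) ring S, in its von Neumann regular
   form: every a has b with a = a^2 b. *)
Definition abs_flat (R : pzRingType) (S : R -> Prop) : Prop :=
  forall a, S a -> exists b, S b /\ a = a * a * b.

Definition pseudofield (gT : finGroupType) (R : pzRingType) (act : gT -> R -> R)
  (S : R -> Prop) : Prop :=
  diff_subring act S /\ abs_flat S /\
  (forall I, diff_ideal act S I ->
     (forall x, I x <-> x = 0) \/ (forall x, I x <-> S x)).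

(* Difference polynomial ring R{y_1..y_n}: the polynomial ring over R  *)
(* in the indeterminates (sigma y_i), sigma in gT, i < n, presented as *)
(* formal terms modulo the congruence [deq] of commutative rings with  *)
(* R -> R{y} a ring homomorphism.  For a subring S of R, S{y} is       *)
(* identified with the terms all of whose constants lie in S.          *)
Inductive dterm (R : Type) (gT : Type) (n : nat) : Type :=
| TConst of R
| TVar of gT & 'I_n
| TAdd of dterm R gT n & dterm R gT n
| TMul of dterm R gT n & dterm R gT n
| TOpp of dterm R gT n.

Arguments TConst {R gT n}.
Arguments TVar {R gT n}.
Arguments TAdd {R gT n}.
Arguments TMul {R gT n}.
Arguments TOpp {R gT n}.

Inductive deq (R : pzRingType) (gT : Type) (n : nat) : dterm R gT n -> dterm R gT n -> Prop :=
| deq_refl t : deq t t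
| deq_sym t u : deq t u -> deq u t
| deq_trans t u v : deq t u -> deq u v -> deq t v
| deq_add t t' u u' : deq t t' -> deq u u' -> deq (TAdd t u) (TAdd t' u')
| deq_mul t t' u u' : deq t t' -> deq u u' -> deq (TMul t u) (TMul t' u')
| deq_opp t t' : deq t t' -> deq (TOpp t) (TOpp t')
| deq_addA t u v : deq (TAdd t (TAdd u v)) (TAdd (TAdd t u) v)
| deq_addC t u : deq (TAdd t u) (TAdd u t)
| deq_add0 t : deq (TAdd (TConst 0) t) t
| deq_addN t : deq (TAdd t (TOpp t)) (TConst 0)
| deq_mulA t u v : deq (TMul t (TMul u v)) (TMul (TMul t u) v)
| deq_mulC t u : deq (TMul t u) (TMul u t)
| deq_mul1 t : deq (TMul (TConst 1) t) t
| deq_mulDl t u v : deq (TMul (TAdd t u) v) (TAdd (TMul t v) (TMul u v))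
| deq_cadd a b : deq (TConst (a + b)) (TAdd (TConst a) (TConst b))
| deq_cmul a b : deq (TConst (a * b)) (TMul (TConst a) (TConst b))
| deq_copp a : deq (TConst (- a)) (TOpp (TConst a)).

Fixpoint tover (R : Type) (gT : Type) (n : nat) (S : R -> Prop) (t : dterm R gT n) : Prop :=
  match t with
  | TConst a => S a
  | TVar _ _ => True
  | TAdd t u => tover S t /\ tover S u
  | TMul t u => tover S t /\ tover S u
  | TOpp t => tover S t
  end.

Fixpoint tact (gT : finGroupType) (R : pzRingType) (n : nat) (act : gT -> R -> R)
  (s : gT) (t : dterm R gT n) : dterm R gT n :=
  match t with
  | TConst a => TConst (act s a)
  | TVar g i => TVar (s * g)%g i
  | TAdd t u => TAdd (tact act s t) (tact act s u)
  | TMul t u => TMul (tact act s t) (tact act s u)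
  | TOpp t => TOpp (tact act s t)
  end.

Fixpoint teval (gT : finGroupType) (R : pzRingType) (n : nat) (act : gT -> R -> R)
  (x : 'I_n -> R) (t : dterm R gT n) : R :=
  match t with
  | TConst a => a
  | TVar g i => act g (x i)
  | TAdd t u => teval act x t + teval act x u
  | TMul t u => teval act x t * teval act x u
  | TOpp t => - teval act x t
  end.

Definition tpow (R : pzRingType) (gT : Type) (n : nat) (t : dterm R gT n) (k : nat) : dterm R gT n :=
  iter k (TMul t) (TConst 1).

Definition tdiff_ideal (gT : finGroupType) (R : pzRingType) (act : gT -> R -> R)
  (S : R -> Prop) (n : nat) (P : dterm R gT n -> Prop) : Prop :=
  (forall t, P t -> tover S t) /\
  (forall t u, P t -> tover S u -> deq t u -> P u) /\
  P (TConst 0) /\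
  (forall t u, P t -> P u -> P (TAdd t u)) /\
  (forall t u, tover S t -> P u -> P (TMul t u)) /\
  (forall s t, P t -> P (tact act s t)).

Definition trad (R : pzRingType) (gT : Type) (n : nat) (S : R -> Prop)
  (P : dterm R gT n -> Prop) (t : dterm R gT n) : Prop :=
  tover S t /\ exists k, P (tpow t k).

Definition tvanish (gT : finGroupType) (R : pzRingType) (act : gT -> R -> R)
  (S : R -> Prop) (n : nat) (P : dterm R gT n -> Prop) (t : dterm R gT n) : Prop :=
  tover S t /\
  forall x : 'I_n -> R, (forall i, S (x i)) ->
    (forall u, P u -> teval act x u = 0) -> teval act x t = 0.

Definition diff_closed (gT : finGroupType) (R : pzRingType) (act : gT -> R -> R)
  (S : R -> Prop) : Prop :=
  forall (n : nat) (P : dterm R gT n -> Prop), tdiff_ideal act S P ->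
    forall t, trad S P t <-> tvanish act S P t.

Definition ring_ideal (R : pzRingType) (I : R -> Prop) : Prop :=
  I 0 /\ (forall x y, I x -> I y -> I (x + y)) /\ (forall r x, I x -> I (r * x)).

Definition maximal_ideal (R : pzRingType) (I : R -> Prop) : Prop :=
  ring_ideal I /\ ~ I 1 /\
  (forall J, ring_ideal J -> (forall x, I x -> J x) -> ~ J 1 -> forall x, J x -> I x).

Definition funact (gT : finGroupType) (L : pzRingType) (s : gT) (f : {ffun gT -> L})
  : {ffun gT -> L} := [ffun t => f (s^-1 * t)%g].

Definition taylor (gT : finGroupType) (A L : pzRingType) (actA : gT -> A -> A)
  (phi : A -> L) (a : A) : {ffun gT -> L} := [ffun t => phi (actA t^-1%g a)].

From HB Require Import structures.
From mathcomp Require Import all_boot all_order all_algebra all_fingroup.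
From Stdlib Require Import Classical.
Set Implicit Arguments. Unset Strict Implicit. Unset Printing Implicit Defensive.
Import GRing.Theory.
Local Open Scope ring_scope.

(* Difference closedness of D means that a system of difference equations with
   coefficients in D that is solvable in Fun L is already solvable in D.  The
   indicator [delta 1] of the identity is characterised by such a system, so it
   lies in D, and with it every constant function [cst (f 1)], f in D; in
   particular every constant [cst (phi a)].  The set of c with [cst c] in D
   contains, with the coefficients of a nonzero polynomial, all its roots, so it
   is all of L since L is algebraic over phi(A).  Finally every f in Fun L is
   the sum of the [cst (f s) * funact s (delta 1)]. *)

Section FunRing.
Variables (gT : finGroupType) (L : fieldType).
Local Notation F := {ffun gT -> L}.
Implicit Types (f g : F) (s u t : gT).

Definition cst (c : L) : F := [ffun=> c].
Definition delta u : F := [ffun t => if t == u then 1 else 0].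

Lemma funactE s f t : funact s f t = f (s^-1 * t)%g. Proof. by rewrite ffunE. Qed.

Lemma funact1 f : funact 1%g f = f.
Proof. by apply/ffunP => t; rewrite funactE invg1 mul1g. Qed.

Lemma funactMg s u f : funact (s * u) f = funact s (funact u f).
Proof. by apply/ffunP => t; rewrite !funactE invMg mulgA. Qed.

Lemma funactD s f g : funact s (f + g) = funact s f + funact s g.
Proof. by apply/ffunP => t; rewrite !(funactE, ffunE). Qed.

Lemma funactM s f g : funact s (f * g) = funact s f * funact s g.
Proof. by apply/ffunP => t; rewrite !(funactE, ffunE). Qed.

Lemma funactN s f : funact s (- f) = - funact s f.
Proof. by apply/ffunP => t; rewrite !(funactE, ffunE). Qed.

Lemma funact0 s : funact s (0 : F) = 0.
Proof. by apply/ffunP => t; rewrite !(funactE, ffunE). Qed.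

Lemma prod_ffunE (I : Type) (r : seq I) (v : I -> F) t :
  (\prod_(i <- r) v i) t = \prod_(i <- r) v i t.
Proof. by elim/big_rec2: _ => // [|i _ y _ <-]; rewrite !ffunE. Qed.

Lemma funact_delta s u : funact s (delta u) = delta (s * u).
Proof.
apply/ffunP => t; rewrite funactE !ffunE.
by rewrite (can2_eq (mulKVg s) (mulKg s)).
Qed.

Lemma sum_delta : \sum_s delta s = 1.
Proof.
apply/ffunP => t; rewrite sum_ffunE ffunE (bigD1 t) //= ffunE eqxx big1 ?addr0 //.
by move=> s /negPf ts; rewrite ffunE eq_sym ts.
Qed.

Lemma mul_delta s u : s != u -> delta s * delta u = 0.
Proof.
move=> /negPf su; apply/ffunP => t; rewrite !ffunE.
by case: (t =P s) => [->|_]; rewrite ?su ?mulr0 ?mul0r.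
Qed.

Lemma ffun_delta_expansion f : f = \sum_s cst (f s) * delta s.
Proof.
apply/ffunP => t; rewrite sum_ffunE (bigD1 t) //= !ffunE eqxx mulr1 big1 ?addr0 //.
by move=> s /negPf ts; rewrite !ffunE eq_sym ts mulr0.
Qed.

Lemma sum_funact_mul_delta1 f : \sum_s funact s (f * delta 1%g) = cst (f 1%g).
Proof.
apply/ffunP => t; rewrite sum_ffunE (bigD1 t) //= big1 ?addr0 => [|s /negPf ts].
  by rewrite funactM funact_delta mulg1 !ffunE eqxx mulr1 mulVg.
by rewrite funactM funact_delta mulg1 !ffunE eq_sym ts mulr0.
Qed.

Lemma delta_of_orthogonal_translates f :
  (forall s, s != 1%g -> funact s f * f = 0) -> \sum_s funact s f = 1 ->
  exists u, f = delta u.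
Proof.
move=> orth sum1.
have orth_at u v : u != v -> f u * f v = 0.
  move=> uv; have := orth (v * u^-1)%g; rewrite divg_eq1 eq_sym => /(_ uv).
  by move/ffunP/(_ v); rewrite !ffunE invMg invgK mulgKV.
have sum1_at t : \sum_s f (s^-1 * t)%g = 1.
  have /ffunP/(_ t) := sum1; rewrite sum_ffunE ffunE => <-.
  by apply: eq_bigr => s _; rewrite funactE.
have [u fu0] : exists u, f u != 0.
  apply/existsP; apply: contraTT (oner_neq0 L); rewrite negb_exists => /forallP f0.
  by rewrite -(sum1_at 1%g) big1 ?eqxx // => s _; apply/eqP/negPn; exact: f0.
have fv0 v : v != u -> f v = 0.
  by move=> /(orth_at _ _)/eqP; rewrite mulf_eq0 (negPf fu0) orbF => /eqP.
exists u; apply/ffunP => t; rewrite ffunE; case: (t =P u) => [->|/eqP tu]; last exact: fv0.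
rewrite -(sum1_at u) (bigD1 1%g) //= invg1 mul1g big1 ?addr0 // => s s1.
by apply: fv0; rewrite -{2}(mul1g u) (inj_eq (mulIg u)) eq_invg1.
Qed.

End FunRing.

Section DifferenceTerms.
Variables (gT : finGroupType) (L : fieldType) (n : nat).
Local Notation F := {ffun gT -> L}.
Local Notation term := (dterm F gT n).
Local Notation cst := (@cst gT L).
Local Notation eval x := (teval (@funact gT L) x).
Implicit Types (x : 'I_n -> F) (t u X : term).

Lemma teval_deq x t u : deq t u -> eval x t = eval x u.
Proof.
elim=> {t u} /= [t|t u _ ->|t u v _ -> _ ->|t t' u u' _ -> _ ->|t t' u u' _ -> _ ->|
  t t' _ ->|t u v|t u|t|t|t u v|t u|t|t u v|a b|a b|a] //.
- by rewrite addrA.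
- by rewrite addrC.
- by rewrite add0r.
- by rewrite subrr.
- by rewrite mulrA.
- exact: ffun_mulC.
- by rewrite mul1r.
- by rewrite mulrDl.
Qed.

Lemma teval_tact x s t : eval x (tact (@funact gT L) s t) = funact s (eval x t).
Proof.
elim: t => //= [g i|t IHt u IHu|t IHt u IHu|t IHt].
- by rewrite funactMg.
- by rewrite IHt IHu funactD.
- by rewrite IHt IHu funactM.
- by rewrite IHt funactN.
Qed.

Lemma teval_tpow1 x k : eval x (tpow (TConst 1 : term) k) = 1.
Proof. by elim: k => //= k ->; rewrite mul1r. Qed.

Lemma tover_tact (D : F -> Prop) s t :
  diff_subring (@funact gT L) D -> tover D t -> tover D (tact (@funact gT L) s t).
Proof.
case=> _ [_ [_ [_ [_ Dact]]]].
elim: t => /= [a|g i|t IHt u IHu|t IHt u IHu|t IHt] //.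
- exact: Dact.
- by case=> /IHt ? /IHu.
- by case=> /IHt ? /IHu.
Qed.

Definition tsum (I : Type) (r : seq I) (v : I -> term) : term :=
  foldr (fun i => TAdd (v i)) (TConst 0) r.

Definition tprod (I : Type) (r : seq I) (v : I -> term) : term :=
  foldr (fun i => TMul (v i)) (TConst 1) r.

Definition thorner (p : seq L) X : term :=
  foldr (fun c v => TAdd (TMul v X) (TConst (cst c))) (TConst 0) p.

Lemma teval_tsum x I r (v : I -> term) : eval x (tsum r v) = \sum_(i <- r) eval x (v i).
Proof. by elim: r => [|i r IH] /=; rewrite ?big_nil ?big_cons ?IH. Qed.

Lemma teval_tprod x I r (v : I -> term) : eval x (tprod r v) = \prod_(i <- r) eval x (v i).
Proof. by elim: r => [|i r IH] /=; rewrite ?big_nil ?big_cons ?IH. Qed.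

Lemma teval_thorner x (p : {poly L}) X g : eval x (thorner p X) g = p.[eval x X g].
Proof.
rewrite /horner; elim: (polyseq p) => [|c cs IH] /=; first by rewrite ffunE.
by rewrite !ffunE IH.
Qed.

Lemma tover_tsum (D : F -> Prop) I r (v : I -> term) :
  D 0 -> (forall i, tover D (v i)) -> tover D (tsum r v).
Proof. by move=> D0 Dv; elim: r => //= i r IH. Qed.

Lemma tover_tprod (D : F -> Prop) (I : eqType) r (v : I -> term) :
  D 1 -> {in r, forall i, tover D (v i)} -> tover D (tprod r v).
Proof.
move=> D1; elim: r => //= i r IH Dv; split; first by apply: Dv; rewrite mem_head.
by apply: IH => j rj; apply: Dv; rewrite inE rj orbT.
Qed.

Lemma tover_thorner (D : F -> Prop) (p : seq L) X :
  D 0 -> tover D X -> {in p, forall c, D (cst c)} -> tover D (thorner p X).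
Proof.
move=> D0 DX; elim: p => //= c p IH Dp; split; last by apply: Dp; rewrite mem_head.
by split=> //; apply: IH => d pd; apply: Dp; rewrite inE pd orbT.
Qed.

End DifferenceTerms.

Section DifferenceClosedSubring.
Variables (gT : finGroupType) (L : fieldType) (D : {ffun gT -> L} -> Prop).
Hypotheses (HDsub : diff_subring (@funact gT L) D) (HDcl : diff_closed (@funact gT L) D).
Local Notation F := {ffun gT -> L}.
Local Notation eval x := (teval (@funact gT L) x).
Local Notation cst := (@cst gT L).
Local Notation delta := (@delta gT L).

Let D0 : D 0. Proof. by case: HDsub. Qed.
Let D1 : D 1. Proof. by case: HDsub => _ []. Qed.
Let DD f g : D f -> D g -> D (f + g).
Proof. by have [_ [_ [_ [Dadd _]]]] := HDsub; apply: Dadd. Qed.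
Let DM f g : D f -> D g -> D (f * g).
Proof. by have [_ [_ [_ [_ [Dmul _]]]]] := HDsub; apply: Dmul. Qed.
Let Dact s f : D f -> D (funact s f).
Proof. by have [_ [_ [_ [_ [_ Dact]]]]] := HDsub; apply: Dact. Qed.

Lemma D_sum (I : Type) (r : seq I) (P : pred I) (v : I -> F) :
  (forall i, P i -> D (v i)) -> D (\sum_(i <- r | P i) v i).
Proof. by move=> Dv; apply: big_ind => //; apply: DD. Qed.

(* The difference polynomials over D vanishing on the zeros in Fun L of E form
   a difference ideal; if E had no zero in D, 1 would lie in its radical. *)
Lemma diff_closed_common_zero n (E : dterm F gT n -> Prop) :
  (forall u, E u -> tover D u) -> (exists y, forall u, E u -> eval y u = 0) ->
  exists x, (forall i, D (x i)) /\ forall u, E u -> eval x u = 0.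
Proof.
move=> DE [y Ey].
pose P u := tover D u /\ forall z, (forall v, E v -> eval z v = 0) -> eval z u = 0.
have HP : tdiff_ideal (@funact gT L) D P.
  split; first by move=> t [].
  split; first by move=> t u [_ Pt] Du tu; split=> // z Ez; rewrite -(teval_deq z tu) Pt.
  split; first by split.
  split; first by move=> t u [Dt Pt] [Du Pu]; split=> // z Ez /=; rewrite Pt // Pu // addr0.
  split; first by move=> t u Dt [Du Pu]; split=> // z Ez /=; rewrite Pu // mulr0.
  move=> s t [Dt Pt]; split; first exact: tover_tact.
  by move=> z Ez; rewrite teval_tact Pt // funact0.
apply: NNPP => noD.
have [_ [k [_ Pk]]] : trad D P (TConst 1).
  apply/(HDcl HP); split=> // x Dx Px; exfalso; apply: noD; exists x; split=> // u Eu.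
  by apply: Px; split; [exact: DE | move=> z; apply].
have /ffunP/(_ 1%g) := Pk y Ey; rewrite teval_tpow1 !ffunE.
by move/eqP; rewrite oner_eq0.
Qed.

Lemma delta1_in : D (delta 1%g).
Proof.
pose X : dterm F gT 1 := TVar 1%g ord0.
pose E u := (exists2 s, s != 1%g & u = TMul (TVar s ord0) X) \/
  u = TAdd (tsum (index_enum gT) (fun s => TVar s ord0)) (TOpp (TConst 1)).
have DE u : E u -> tover D u.
  by case=> [[s _ ->]|->] //=; split=> //; apply: tover_tsum.
have [|x [Dx Ex]] := diff_closed_common_zero DE.
  exists (fun=> delta 1%g) => u [[s s1 ->]|->] /=.
    by rewrite funact1 funact_delta mulg1 mul_delta.
  rewrite teval_tsum /=.
  by under eq_bigr do rewrite funact_delta mulg1; rewrite sum_delta subrr.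
have [t0 e_t0] : exists t0, x ord0 = delta t0.
  apply: delta_of_orthogonal_translates => [s s1|].
    by have /= := Ex _ (or_introl (ex_intro2 _ _ s s1 erefl)); rewrite funact1.
  have /= := Ex _ (or_intror erefl); rewrite teval_tsum /=.
  by move/eqP; rewrite subr_eq0 => /eqP.
by rewrite -(mulVg t0) -funact_delta -e_t0; apply/Dact/Dx.
Qed.

Lemma cst_at1_in f : D f -> D (cst (f 1%g)).
Proof.
move=> Df; rewrite -sum_funact_mul_delta1.
by apply: D_sum => s _; apply/Dact/DM/delta1_in.
Qed.

Lemma all_in_of_cst : (forall c, D (cst c)) -> forall f, D f.
Proof.
move=> Dcst f; rewrite (ffun_delta_expansion f).
apply: D_sum => s _; apply: DM => //.
by rewrite -(mulg1 s) -funact_delta; apply/Dact/delta1_in.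
Qed.

(* The second equation is Rabinowitsch's trick: it forces X to avoid s. *)
Lemma cst_root_avoiding (p : {poly L}) (s : seq L) (z : L) :
  {in (p : seq L), forall c, D (cst c)} -> {in s, forall r, D (cst r)} ->
  root p z -> z \notin s ->
  exists r, [/\ D (cst r), root p r & r \notin s].
Proof.
move=> Dp Ds pz zs.
pose X : dterm F gT 2 := TVar 1%g ord0.
pose W : dterm F gT 2 := TVar 1%g ord_max.
pose E u := u = thorner p X \/
  u = TAdd (TMul W (tprod s (fun r => TAdd X (TOpp (TConst (cst r)))))) (TOpp (TConst 1)).
have DE u : E u -> tover D u.
  case=> ->; first exact: tover_thorner.
  by split=> //; split=> //; apply: tover_tprod => // r /Ds.
pose c := \prod_(r <- s) (z - r).
have c0 : c != 0.
  rewrite prodf_seq_neq0; apply/allP => r rs /=; rewrite subr_eq0.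
  by apply: contraNneq zs => ->.
have [|x [Dx Ex]] := diff_closed_common_zero DE.
  exists (fun i => if i == ord0 then cst z else cst c^-1) => u [|] -> /=;
    apply/ffunP => g; rewrite ?teval_thorner /= !funact1 /= ?ffunE.
    exact/eqP.
  rewrite teval_tprod prod_ffunE.
  by under eq_bigr do rewrite !ffunE; rewrite mulVf ?subrr.
exists (x ord0 1%g); split; first exact/cst_at1_in/Dx.
  have /ffunP/(_ 1%g) := Ex _ (or_introl erefl).
  by rewrite teval_thorner /= funact1 ffunE => /eqP.
have /ffunP/(_ 1%g) := Ex _ (or_intror erefl).
rewrite /= !ffunE teval_tprod prod_ffunE => /eqP; rewrite subr_eq0 => /eqP inv.
apply/negP => xs; move: inv; rewrite (big_rem _ xs) /= !ffunE invg1 mul1g.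
by rewrite subrr mul0r mulr0 => /eqP; rewrite eq_sym oner_eq0.
Qed.

(* Otherwise the previous lemma produces unboundedly many roots of p. *)
Lemma cst_root_in (p : {poly L}) (z : L) :
  p != 0 -> {in (p : seq L), forall c, D (cst c)} -> root p z -> D (cst z).
Proof.
move=> p0 Dp pz; apply: NNPP => Dz.
have roots k : exists s, [/\ uniq s, size s = k & {in s, forall r, D (cst r) /\ root p r}].
  elim: k => [|k [s [us sk Ds]]]; first by exists [::].
  have zs : z \notin s by apply/negP => /Ds [].
  have [r [Dr pr rs]] := cst_root_avoiding Dp (fun r rs => (Ds r rs).1) pz zs.
  exists (r :: s); split=> /=; [by rewrite rs | by rewrite sk |].
  by move=> q; rewrite inE => /predU1P [->|/Ds].
have [s [us sp Ds]] := roots (size p).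
have ps : all (root p) s by apply/allP => r /Ds [].
by have := max_poly_roots p0 ps us; rewrite sp ltnn.
Qed.

End DifferenceClosedSubring.

Theorem proposition4p14 (gT : finGroupType) (A : comNzRingType) (actA : gT -> A -> A)
  (HactA : diff_action actA)
  (HA : pseudofield actA (fun _ => True))
  (m : A -> Prop) (Hm : maximal_ideal m)
  (L : closedFieldType) (phi : {rmorphism A -> L})
  (Hker : forall a, phi a = 0 <-> m a)
  (Halg : forall z : L, exists p : {poly L},
     p != 0 /\ (forall i, exists a, p`_i = phi a) /\ root p z)
  (D : {ffun gT -> L} -> Prop)
  (HDsub : diff_subring (@funact gT L) D)
  (HDpf : pseudofield (@funact gT L) D)
  (HDcl : diff_closed (@funact gT L) D)
  (HAD : forall a, D (taylor actA phi a)) :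
  forall f : {ffun gT -> L}, D f.
Proof.
have Dphi a : D (cst gT (phi a)).
  by have := cst_at1_in HDsub HDcl (HAD a); rewrite ffunE invg1 HactA.1.
apply: (all_in_of_cst HDsub HDcl) => z.
have [p [p0 [p_phi pz]]] := Halg z.
apply: (cst_root_in HDsub HDcl p0 _ pz) => c /(nth_index 0) <-.
by have [a ->] := p_phi (index c p).
Qed.
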